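(* For any positive integers $k,\Delta$ with $3 \le k\le \Delta$ and any positive integers $x_1,\dots,x_k$ with $1\le x_j \le \Delta$, $$ \frac2{\Delta-1} \sum_{1\le i<j \le k} \frac1{x_i+x_j+2k-4} \le \sum_{j=1}^k \frac1{x_j+k} \le \frac{\Delta+3}{4} \sum_{1\le i<j \le k} \frac1{x_i+x_j+2k-4} \, . $$ *)

From mathcomp Require Import all_boot all_order all_algebra.
Set Implicit Arguments. Unset Strict Implicit. Unset Printing Implicit Defensive.

From mathcomp Require Import all_boot all_order all_algebra.
From mathcomp Require Import ring lra zify.
Set Implicit Arguments. Unset Strict Implicit. Unset Printing Implicit Defensive.
Import Order.TTheory GRing.Theory Num.Theory.
Local Open Scope ring_scope.

(* With a_j = x_j + k in [k+1, Delta+k] the pair term is 1/(a_i + a_j - 4),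
   and each 1/a_j occurs in exactly k-1 of the pair sums 1/a_i + 1/a_j, so T is
   (k-1)^-1 times their total.  Both bounds therefore reduce to comparing
   (k-1)^-1 (1/a + 1/b) with 1/(a + b - 4) for a single pair.  Cleared of
   denominators, the lower bound reads
   (Delta-k) t(t-4) + (k-1)(a(a-4) + b(b-4)) >= 0 with t = a + b, while the upper
   bound is a polynomial concave in a and in b separately, hence minimal at a
   corner of the box [k+1, Delta+k]^2, where it is checked directly. *)

Lemma sum_pairs_addE (V : nmodType) (n : nat) (h : 'I_n -> V) :
  \sum_(i < n) \sum_(j < n | (i < j)%N) (h i + h j) = (\sum_(i < n) h i) *+ n.-1.
Proof.
under eq_bigr do rewrite big_split /=.
rewrite big_split /= [X in _ + X](exchange_big_dep xpredT) //= -big_split /=.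
rewrite -sumrMnl; apply: eq_bigr => i _.
have ->: n.-1 = #|[pred j : 'I_n | j != i]| by rewrite cardC1 card_ord.
rewrite -sumr_const big_mkcond [in X in _ + X]big_mkcond [RHS]big_mkcond -big_split /=.
by apply: eq_bigr => j _; rewrite inE -val_eqE /=; case: ltngtP; rewrite ?addr0 ?add0r.
Qed.

Lemma sum_pairs_meanE (F : numFieldType) (n : nat) (h : 'I_n -> F) : (1 < n)%N ->
  \sum_(i < n) h i =
  \sum_(i < n) \sum_(j < n | (i < j)%N) (n%:R - 1)^-1 * (h i + h j).
Proof.
move=> n_gt1; under [RHS]eq_bigr do rewrite -mulr_sumr.
have pred_nR : n%:R - 1 = n.-1%:R :> F.
  by rewrite -[in LHS](prednK (ltnW n_gt1)) -natr1 addrK.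
rewrite -mulr_sumr sum_pairs_addE pred_nR -(mulr_natl (\sum_(i < n) h i)) mulKf //.
by rewrite pnatr_eq0 -lt0n -ltnS prednK // ltnW.
Qed.

Section RealField.

Variable R : realFieldType.
Implicit Types (k D a b : R).

Lemma concave_quadratic_ge0 (c2 c1 c0 lo hi t : R) : c2 <= 0 -> lo <= t <= hi ->
  0 <= c2 * lo ^+ 2 + c1 * lo + c0 -> 0 <= c2 * hi ^+ 2 + c1 * hi + c0 ->
  0 <= c2 * t ^+ 2 + c1 * t + c0.
Proof.
move=> c2_le0 /andP[lo_t t_hi] g_lo g_hi.
have [lo_hi | hi_le_lo] := ltrP 0 (hi - lo); last by have -> : t = lo by lra.
have chord : (hi - lo) * (c2 * t ^+ 2 + c1 * t + c0) =
  (hi - t) * (c2 * lo ^+ 2 + c1 * lo + c0) + (t - lo) * (c2 * hi ^+ 2 + c1 * hi + c0)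
  + (- c2) * ((t - lo) * (hi - t)) * (hi - lo) by ring.
rewrite -(pmulr_rge0 _ lo_hi) chord.
apply: addr_ge0; first by apply: addr_ge0; apply: mulr_ge0; lra.
by apply: mulr_ge0; [apply: mulr_ge0; [lra | apply: mulr_ge0] | ]; lra.
Qed.

Lemma pair_lower k D a b : 1 < k -> k <= D -> 4 <= a -> 4 <= b ->
  2 / (D - 1) * (a + b - 4)^-1 <= (k - 1)^-1 * (a^-1 + b^-1).
Proof.
move=> k_gt1 kD a_ge4 b_ge4.
have gap : 0 <= (D - 1) * (a + b) * (a + b - 4) - 2 * (k - 1) * a * b.
  have sum_term : 0 <= (D - k) * ((a + b) * (a + b - 4)) by apply: mulr_ge0; nra.
  have sq_terms : 0 <= (k - 1) * (a * (a - 4) + b * (b - 4))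
    by apply: mulr_ge0; nra.
  lra.
rewrite -subr_ge0 (_ : _ - _ = ((D - 1) * (a + b) * (a + b - 4) - 2 * (k - 1) * a * b)
  / ((k - 1) * (D - 1) * a * b * (a + b - 4))); last first.
  by field; apply/and5P; split; apply/negP => /eqP; lra.
by apply: divr_ge0 => //; do 4?apply: mulr_ge0; lra.
Qed.

Definition upper_gap k D a b := (D + 3) * (k - 1) * a * b - 4 * (a + b) * (a + b - 4).

Lemma upper_gap_min_min k D : 3 <= k -> k <= D -> 0 <= upper_gap k D (k + 1) (k + 1).
Proof.
move=> k_ge3 kD.
rewrite (_ : upper_gap _ _ _ _ = (k + 1) * (k - 1) * ((D + 3) * (k + 1) - 16));
  last by rewrite /upper_gap; ring.
by do 2?apply: mulr_ge0; nra.
Qed.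

Lemma upper_gap_max_min k D : 3 <= k -> k <= D -> 0 <= upper_gap k D (D + k) (k + 1).
Proof.
move=> k_ge3 kD; rewrite /upper_gap.
have : 0 <= (k - 3) * (D - k) by apply: mulr_ge0; lra.
have : 0 <= (k - 3) * (k - 3) by apply: mulr_ge0; lra.
have : 0 <= (D - k) * (D - k) by apply: mulr_ge0; lra.
nra.
Qed.

Lemma upper_gap_max_max k D : 3 <= k -> k <= D -> 0 <= upper_gap k D (D + k) (D + k).
Proof.
move=> k_ge3 kD.
rewrite (_ : upper_gap _ _ _ _ = (D + k) * ((D + k) * ((D + 3) * (k - 1) - 16) + 32));
  last by rewrite /upper_gap; ring.
apply: mulr_ge0; first lra.
have : 0 <= (k - 3) * (D - k) by apply: mulr_ge0; lra.
nra.
Qed.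

Lemma upper_gapC k D a b : upper_gap k D a b = upper_gap k D b a.
Proof. by rewrite /upper_gap; ring. Qed.

Lemma upper_gap_concave k D a b lo hi : lo <= b <= hi ->
  0 <= upper_gap k D a lo -> 0 <= upper_gap k D a hi -> 0 <= upper_gap k D a b.
Proof.
set c1 := (D + 3) * (k - 1) * a - 8 * a + 16; set c0 := 16 * a - 4 * a ^+ 2.
have quad x : upper_gap k D a x = -4 * x ^+ 2 + c1 * x + c0.
  by rewrite /upper_gap /c1 /c0; ring.
rewrite !quad; apply: concave_quadratic_ge0; lra.
Qed.

Lemma upper_gap_ge0 k D a b : 3 <= k -> k <= D ->
  k + 1 <= a <= D + k -> k + 1 <= b <= D + k -> 0 <= upper_gap k D a b.
Proof.
move=> k_ge3 kD a_range b_range.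
have min_min := upper_gap_min_min k_ge3 kD.
have max_min := upper_gap_max_min k_ge3 kD.
have max_max := upper_gap_max_max k_ge3 kD.
apply: (upper_gap_concave b_range); rewrite upper_gapC;
  apply: (upper_gap_concave a_range) => //; by rewrite upper_gapC.
Qed.

Lemma pair_upper k D a b : 3 <= k -> k <= D ->
  k + 1 <= a <= D + k -> k + 1 <= b <= D + k ->
  (k - 1)^-1 * (a^-1 + b^-1) <= (D + 3) / 4 * (a + b - 4)^-1.
Proof.
move=> k_ge3 kD a_range b_range.
have gap := upper_gap_ge0 k_ge3 kD a_range b_range.
case/andP: a_range b_range => a_lo _ /andP[b_lo _].
rewrite -subr_ge0 (_ : _ - _ = upper_gap k D a b / (4 * (k - 1) * a * b * (a + b - 4))).
  by apply: divr_ge0 => //; do 4?apply: mulr_ge0; lra.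
by rewrite /upper_gap; field; apply/and4P; split; apply/negP => /eqP; lra.
Qed.

End RealField.

Theorem corollary3p4 (k Delta : nat) (x : 'I_k -> nat) :
  (3 <= k)%N -> (k <= Delta)%N ->
  (forall j, 1 <= x j <= Delta)%N ->
  let S := \sum_(i < k) \sum_(j < k | (i < j)%N)
             ((x i + x j + 2 * k - 4)%:R : rat)^-1 in
  let T := \sum_(j < k) ((x j + k)%:R : rat)^-1 in
  (2 / (Delta%:R - 1)) * S <= T /\ T <= ((Delta%:R + 3) / 4) * S.
Proof.
move=> k_ge3 kD x_range S T.
pose a j := ((x j + k)%:R : rat).
have a_range j : k%:R + 1 <= a j <= Delta%:R + k%:R.
  by rewrite /a natr1 -natrD !ler_nat; have := x_range j; lia.
have S_pairs : S = \sum_(i < k) \sum_(j < k | (i < j)%N) (a i + a j - 4)^-1.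
  apply: eq_bigr => i _; apply: eq_bigr => j _; rewrite /a -natrD -natrB; last lia.
  by congr (_%:R^-1); lia.
have T_pairs := sum_pairs_meanE (fun j => (a j)^-1) (ltnW k_ge3).
have k_ge3R : 3 <= k%:R :> rat by rewrite (ler_nat _ 3).
have kDR : k%:R <= Delta%:R :> rat by rewrite ler_nat.
rewrite S_pairs /T T_pairs !mulr_sumr; split; apply: ler_sum => i _;
  rewrite mulr_sumr; apply: ler_sum => j _.
- have /andP[? _] := a_range i; have /andP[? _] := a_range j.
  by apply: pair_lower; lra.
- exact: pair_upper.
Qed.
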